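(* Let $X$ be a set, $B=(B,+,0)$ a unitary magma and $(A,k,q,s,p)$ a retraction point from $X$ to $B$. Then for all $x,x'\in X$ and $b,b'\in B$: (a) $k(q(0))=0$ and $q(k(x)+k(q(0)))=x=q(k(q(0))+k(x))$; (b) $q(k(x)+s(b))=q((k(x)+0)+(0+s(b)))=q((k(x)+s(b))+(0+0))=q((0+0)+(k(x)+s(b)))$; (c) $q(s(b)+s(b'))=q(0)$; (d) $q\big((k(x)+s(b))+(k(x')+s(b'))\big)=q\big(k(w)+s(b+b')\big)$, where $u=q(k(x)+s(b))$, $v=q(k(x')+s(b'))$ and $w=q\big((k(u)+s(b))+(k(v)+s(b'))\big)$.
   Context: A unitary magma is a set with a binary operation $+$ and an element $0$ with $b+0=b=0+b$ for all $b$; morphisms preserve $+$ and $0$. Given a set $X$ and a unitary magma $B$, a retraction point from $X$ to $B$ is a tuple $(A,k,q,s,p)$ where $A=(A,+,0)$ is a unitary magma, $k\colon X\to A$ and $q\colon A\to X$ are maps, $s\colon B\to A$ and $p\colon A\to B$ are morphisms of unitary magmas, and $p(s(b))=b$, $q(k(x))=x$, $p(k(x))=0$, $q(s(b))=q(0)$, and $k(q(a))+s(p(a))=a$ for all $x\in X$, $b\in B$, $a\in A$. *)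

Record UnitaryMagma := {
  um_carrier :> Type;
  um_add : um_carrier -> um_carrier -> um_carrier;
  um_zero : um_carrier;
  um_add0r : forall b, um_add um_zero b = b;
  um_addr0 : forall b, um_add b um_zero = b
}.

Arguments um_add {_} _ _.
Arguments um_zero {_}.

Definition um_morphism (M N : UnitaryMagma) (f : M -> N) : Prop :=
  (forall x y, f (um_add x y) = um_add (f x) (f y)) /\ f um_zero = um_zero.

Definition retraction_point (X : Type) (B A : UnitaryMagma)
  (k : X -> A) (q : A -> X) (s : B -> A) (p : A -> B) : Prop :=
  um_morphism B A s /\ um_morphism A B p /\
  (forall b, p (s b) = b) /\
  (forall x, q (k x) = x) /\
  (forall x, p (k x) = um_zero) /\
  (forall b, q (s b) = q um_zero) /\
  (forall a, um_add (k (q a)) (s (p a)) = a).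


(* Everything follows from the decomposition a = k (q a) + s (p a).  At a = 0 it
   gives k (q 0) = 0.  Since p (k x + s b) = b, the decomposition of k x + s b
   reads k (q (k x + s b)) + s b = k x + s b, so such sums may be replaced by
   their normal forms inside q; applied to the sum T of two of them, for which
   p T = b + b', it yields (d). *)

Section RetractionPoint.

Context {X : Type} {B A : UnitaryMagma}
  {k : X -> A} {q : A -> X} {s : B -> A} {p : A -> B}.

Hypothesis hr : retraction_point X B A k q s p.

Lemma s_add b b' : s (um_add b b') = um_add (s b) (s b').
Proof. destruct hr as [[s_add _] _]. apply s_add. Qed.

Lemma s_zero : s um_zero = um_zero.
Proof. destruct hr as [[_ s_zero] _]. exact s_zero. Qed.

Lemma p_add a a' : p (um_add a a') = um_add (p a) (p a').
Proof. destruct hr as [_ [[p_add _] _]]. apply p_add. Qed.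

Lemma p_zero : p um_zero = um_zero.
Proof. destruct hr as [_ [[_ p_zero] _]]. exact p_zero. Qed.

Lemma p_s b : p (s b) = b.
Proof. destruct hr as [_ [_ [p_s _]]]. apply p_s. Qed.

Lemma q_k x : q (k x) = x.
Proof. destruct hr as [_ [_ [_ [q_k _]]]]. apply q_k. Qed.

Lemma p_k x : p (k x) = um_zero.
Proof. destruct hr as [_ [_ [_ [_ [p_k _]]]]]. apply p_k. Qed.

Lemma q_s b : q (s b) = q um_zero.
Proof. destruct hr as [_ [_ [_ [_ [_ [q_s _]]]]]]. apply q_s. Qed.

Lemma k_q_add_s_p a : um_add (k (q a)) (s (p a)) = a.
Proof. destruct hr as [_ [_ [_ [_ [_ [_ decomp]]]]]]. apply decomp. Qed.

Lemma k_q_zero : k (q um_zero) = um_zero.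
Proof.
  pose proof (k_q_add_s_p um_zero) as decomp0.
  rewrite p_zero, s_zero, um_addr0 in decomp0.
  exact decomp0.
Qed.

Lemma q_add_k_q_zero x : q (um_add (k x) (k (q um_zero))) = x.
Proof. rewrite k_q_zero, um_addr0. apply q_k. Qed.

Lemma q_k_q_zero_add x : q (um_add (k (q um_zero)) (k x)) = x.
Proof. rewrite k_q_zero, um_add0r. apply q_k. Qed.

Lemma q_s_add_s b b' : q (um_add (s b) (s b')) = q um_zero.
Proof. rewrite <- s_add. apply q_s. Qed.

Lemma p_k_add_s x b : p (um_add (k x) (s b)) = b.
Proof. rewrite p_add, p_k, p_s. apply um_add0r. Qed.

Lemma k_q_k_add_s x b :
  um_add (k (q (um_add (k x) (s b)))) (s b) = um_add (k x) (s b).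
Proof.
  pose proof (k_q_add_s_p (um_add (k x) (s b))) as decomp.
  rewrite p_k_add_s in decomp.
  exact decomp.
Qed.

Lemma q_add_k_add_s x x' b b' :
  q (um_add (um_add (k x) (s b)) (um_add (k x') (s b')))
  = q (um_add (k (q (um_add (um_add (k (q (um_add (k x) (s b)))) (s b))
                            (um_add (k (q (um_add (k x') (s b')))) (s b')))))
              (s (um_add b b'))).
Proof.
  rewrite !k_q_k_add_s.
  set (T := um_add (um_add (k x) (s b)) (um_add (k x') (s b'))).
  assert (pT : p T = um_add b b').
  { unfold T. rewrite p_add, !p_k_add_s. reflexivity. }
  rewrite <- pT, k_q_add_s_p.
  reflexivity.
Qed.

End RetractionPoint.

Theorem proposition2p2 (X : Type) (B A : UnitaryMagma)
  (k : X -> A) (q : A -> X) (s : B -> A) (p : A -> B) :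
  retraction_point X B A k q s p ->
  forall (x x' : X) (b b' : B),
    (* (a) *)
    (k (q um_zero) = um_zero /\
     q (um_add (k x) (k (q um_zero))) = x /\
     x = q (um_add (k (q um_zero)) (k x))) /\
    (* (b) *)
    (q (um_add (k x) (s b))
       = q (um_add (um_add (k x) um_zero) (um_add um_zero (s b))) /\
     q (um_add (um_add (k x) um_zero) (um_add um_zero (s b)))
       = q (um_add (um_add (k x) (s b)) (um_add um_zero um_zero)) /\
     q (um_add (um_add (k x) (s b)) (um_add um_zero um_zero))
       = q (um_add (um_add um_zero um_zero) (um_add (k x) (s b)))) /\
    (* (c) *)
    q (um_add (s b) (s b')) = q um_zero /\
    (* (d) *)
    (let u := q (um_add (k x) (s b)) in
     let v := q (um_add (k x') (s b')) in
     let w := q (um_add (um_add (k u) (s b)) (um_add (k v) (s b'))) in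
     q (um_add (um_add (k x) (s b)) (um_add (k x') (s b')))
       = q (um_add (k w) (s (um_add b b')))).
Proof.
  intros hr x x' b b'.
  split; [| split; [| split]].
  - split; [| split].
    + exact (k_q_zero hr).
    + exact (q_add_k_q_zero hr x).
    + symmetry. exact (q_k_q_zero_add hr x).
  - rewrite !um_addr0, !um_add0r. repeat split.
  - exact (q_s_add_s hr b b').
  - exact (q_add_k_add_s hr x x' b b').
Qed.
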